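(* Let $G$ be a graph with vertex set $V$ partitioned into $V_1,\dots,V_k$ with no edge inside any $V_i$, let $G'$, $X,Y,U$ be as constructed in the context, and let $S=V\cup X\cup U$, $T=V\cup Y\cup U$ and $\ell=8\binom{k}{2}+2k$. If there is a token sliding reconfiguration sequence of length at most $\ell$ from $S$ to $T$ in $G'$, then $G$ contains a clique $\{v_1,\dots,v_k\}$ with $v_i\in V_i$ for all $i$.
   Context: Construction of $G'$: start with $V$. For each edge $e=\{u,v\}$ of $G$ add a vertex $x_e$ adjacent to $u$ and $v$; let $E$ be the set of all $x_e$, and for each unordered pair $\{i,j\}$, $i\ne j$, let $\mathcal{E}_{ij}$ be the set of $x_e$ with $e$ joining $V_i$ and $V_j$; label these $\binom k2$ sets by $1,\dots,\binom k2$. Add independent sets $X=\{a_1,\dots,a_{\binom k2}\}$, $Y=\{b_1,\dots,b_{\binom k2}\}$. For each label $t$ and each $x_e$ in the set labeled $t$, add a path $a_t-p-q-r-x_e$ with three new internal vertices, putting the middle vertex $q$ into $U_1$, and a path $b_t-p'-q'-r'-x_e$ with three new internal vertices, putting $q'$ into $U_2$; $U=U_1\cup U_2$. For each $v\in V$ add a new vertex $z_v$ adjacent only to $v$. A token sliding reconfiguration sequence of length $m$ from $S$ to $T$ is a sequence $S=I_0,\dots,I_m=T$ of independent sets of size $|S|$ with each $I_{j+1}=(I_j\setminus\{u\})\cup\{w\}$ for some $u\in I_j$, $w\notin I_j$, $\{u,w\}\in E(G')$. *)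

From HB Require Import structures.
From mathcomp Require Import all_boot.
Set Implicit Arguments. Unset Strict Implicit. Unset Printing Implicit Defensive.

Section Construction.
Variables (V : finType) (e : rel V) (k : nat) (part : V -> 'I_k).

Definition is_edge (A : {set V}) : bool :=
  [exists u, exists v, e u v && (A == [set u; v])].
Definition edgeT := {A : {set V} | is_edge A}.

Definition labT := {P : {set 'I_k} | #|P| == 2}.

Definition lab_of (t : labT) (x : edgeT) : bool := val t == part @: val x.

Inductive gvert :=
| GV of V
| GX of edgeT      (* subdivision vertex x_e *)
| GA of labT
| GB of labT
| GP of edgeT      (* p on the path a_t - p - q - r - x_e *)
| GQ of edgeT
| GR of edgeT
| GP' of edgeT     (* p' on the path b_t - p' - q' - r' - x_e *)
| GQ' of edgeT
| GR' of edgeT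
| GZ of V.

Definition gcode (x : gvert) : (V + edgeT + labT + labT + (edgeT * 'I_6) + V)%type :=
  match x with
  | GV v => inl (inl (inl (inl (inl v))))
  | GX a => inl (inl (inl (inl (inr a))))
  | GA t => inl (inl (inl (inr t)))
  | GB t => inl (inl (inr t))
  | GP a => inl (inr (a, inord 0))
  | GQ a => inl (inr (a, inord 1))
  | GR a => inl (inr (a, inord 2))
  | GP' a => inl (inr (a, inord 3))
  | GQ' a => inl (inr (a, inord 4))
  | GR' a => inl (inr (a, inord 5))
  | GZ v => inr v
  end.

Definition gdecode (c : (V + edgeT + labT + labT + (edgeT * 'I_6) + V)%type) : gvert :=
  match c with
  | inl (inl (inl (inl (inl v)))) => GV v
  | inl (inl (inl (inl (inr a)))) => GX a
  | inl (inl (inl (inr t))) => GA t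
  | inl (inl (inr t)) => GB t
  | inl (inr (a, i)) =>
      match val i with
      | 0 => GP a | 1 => GQ a | 2 => GR a | 3 => GP' a | 4 => GQ' a | _ => GR' a
      end
  | inr v => GZ v
  end.

Lemma gcodeK : cancel gcode gdecode.
Proof. by case=> //= a; rewrite inordK. Qed.

HB.instance Definition _ := Finite.copy gvert (can_type gcodeK).

Definition garc (x y : gvert) : bool :=
  match x, y with
  | GX a, GV v => v \in val a
  | GA t, GP a => lab_of t a
  | GP a, GQ b => a == b
  | GQ a, GR b => a == b
  | GR a, GX b => a == b
  | GB t, GP' a => lab_of t a
  | GP' a, GQ' b => a == b
  | GQ' a, GR' b => a == b
  | GR' a, GX b => a == b
  | GZ v, GV w => v == w
  | _, _ => false
  end.

Definition gadj (x y : gvert) : bool := garc x y || garc y x.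

Definition Vset : {set gvert} := [set x | if x is GV _ then true else false].
Definition Xset : {set gvert} := [set x | if x is GA _ then true else false].
Definition Yset : {set gvert} := [set x | if x is GB _ then true else false].
Definition U1set : {set gvert} := [set x | if x is GQ _ then true else false].
Definition U2set : {set gvert} := [set x | if x is GQ' _ then true else false].
Definition Uset : {set gvert} := U1set :|: U2set.

Definition Sset : {set gvert} := Vset :|: Xset :|: Uset.
Definition Tset : {set gvert} := Vset :|: Yset :|: Uset.

End Construction.

Section TokenSliding.
Variables (T : finType) (adj : rel T).

Definition independent (I : {set T}) : bool :=
  [forall x in I, forall y in I, ~~ adj x y].

Definition ts_step (I J : {set T}) : bool :=
  [exists u, exists w,
    [&& u \in I, w \notin I, adj u w & J == (I :\ u) :|: [set w]]].

(* A token sliding reconfiguration sequence S = I_0, ..., I_m = T' of length m: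
   I_1 .. I_m are the elements of s. *)
Definition ts_reconf (S T' : {set T}) (m : nat) : Prop :=
  exists s : seq {set T},
    [/\ size s = m, path ts_step S s, last S s = T' &
        all (fun I => independent I && (#|I| == #|S|)) (S :: s)].

End TokenSliding.

From HB Require Import structures.
From mathcomp Require Import all_boot zify.
Set Implicit Arguments. Unset Strict Implicit. Unset Printing Implicit Defensive.

(* Level the vertices of G' from 0 at a_t to 8 at b_t along the paths
   a_t - p - q - r - x_e - r' - q' - p' - b_t, putting V and the z_v at the
   level 4 of the x_e.  A slide raises the total level of the tokens by at most
   one, and not at all when a token enters or leaves V; going from S to T raises
   it by 8 C(k,2).  Hence at most 2k moves touch V, and since T contains V every
   vertex of V vacated on the way costs two of them: the set D of vacated
   vertices has at most k elements.  For each label t, the set made of a_t and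
   of the p, q, r hanging from it holds one token more in S than in T, so some
   token leaves it, necessarily by a slide r -> x_e with e labelled t, and
   independence then forces both ends of e to be vacated.  So D meets every
   part, once, and its vertices are pairwise adjacent. *)

Section SlideCounting.
Variable T : finType.

Lemma big_slide (f : T -> nat) (I : {set T}) u w : u \in I -> w \notin I ->
  \sum_(x in I :\ u :|: [set w]) f x + f u = \sum_(x in I) f x + f w.
Proof.
move=> uI wI; rewrite setUC big_setU1 /= ?(big_setD1 u uI) /=; first lia.
by rewrite !inE negb_and wI orbT.
Qed.

Lemma card_slideI (I C : {set T}) u w : u \in I -> w \notin I ->
  #|(I :\ u :|: [set w]) :&: C| + (u \in C) = #|I :&: C| + (w \in C).
Proof.
move=> uI wI; rewrite -!sum1dep_card.
have := big_slide (fun x => (x \in C) : nat) uI wI.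
by rewrite -!big_mkcondr /= !sum1dep_card.
Qed.

(* Moves spent on the vacated vertices [E] when [O] is the set of occupied ones:
   one to vacate each, and one more to refill it. *)
Definition vacate_cost (E O : {set T}) := #|E| + #|E :&: O|.

Lemma vacate_cost_update (E O O' : {set T}) : ~: O \subset E ->
  vacate_cost (E :|: ~: O') O' <= vacate_cost E O + #|O :\: O'| + #|O' :\: O|.
Proof.
move=> /subsetP vacE.
have sub1 : E :|: ~: O' \subset E :|: (O :\: O').
  apply/subsetP=> x; rewrite !inE; case: (boolP (x \in E)) => //= xE xO'.
  by rewrite xO' /=; apply: contraR xE => xO; apply: vacE; rewrite inE.
have sub2 : (E :|: ~: O') :&: O' \subset (E :&: O) :|: (O' :\: O).
  by apply/subsetP=> x; rewrite !inE; case: (x \in O'); case: (x \in O); case: (x \in E).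
move: (subset_leq_card sub1) (subset_leq_card sub2).
move: (leq_of_leqif (leq_card_setU E (O :\: O'))).
move: (leq_of_leqif (leq_card_setU (E :&: O) (O' :\: O))).
rewrite /vacate_cost; lia.
Qed.
End SlideCounting.

Section PathPotential.
Variables (A B : Type) (R : rel A) (Q : pred A) (upd : B -> A -> B).
Variables (P : B -> A -> Prop) (pot : B -> A -> nat).
Hypothesis step : forall b I J, R I J -> Q J -> P b I ->
  P (upd b J) J /\ pot (upd b J) J <= (pot b I).+1.

Lemma path_potential s b I : path R I s -> all Q s -> P b I ->
  P (foldl upd b s) (last I s) /\ pot (foldl upd b s) (last I s) <= pot b I + size s.
Proof.
elim: s b I => [|J s IH] b I /=; first by rewrite addn0.
case/andP=> RIJ pathJ /andP[QJ Qs] PbI.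
have [PJ potJ] := step RIJ QJ PbI.
have [Pend pot_end] := IH _ _ pathJ Qs PJ.
by split=> //; rewrite (leq_trans pot_end) // addnS -addSn leq_add2r.
Qed.
End PathPotential.

Section Reduction.
Variables (V : finType) (e : rel V) (k : nat) (part : V -> 'I_k).
Local Notation G := (gvert e k).
Local Notation adj := (@gadj V e k part).

Definition level (x : G) : nat :=
  match x with
  | GA _ => 0 | GP _ => 1 | GQ _ => 2 | GR _ => 3 | GX _ => 4
  | GR' _ => 5 | GQ' _ => 6 | GP' _ => 7 | GB _ => 8 | GV _ | GZ _ => 4
  end.

Lemma adj_level u w : adj u w ->
  level w + (u \in Vset e k) + (w \in Vset e k) <= (level u).+1.
Proof. by rewrite /gadj !inE; case: u => ?; case: w => ?. Qed.

Definition height (I : {set G}) := \sum_(x in I) level x.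

Definition covered (I : {set G}) : {set V} := GV e k @^-1: I.

Lemma mem_covered (I : {set G}) v : (v \in covered I) = (GV e k v \in I).
Proof. by rewrite inE. Qed.

Lemma card_covered1 x : #|covered [set x]| = (x \in Vset e k).
Proof.
case: x => a; rewrite inE /=; try by apply: eq_card0 => v; rewrite !inE.
by rewrite -(cards1 a); apply: eq_card => v; rewrite !inE; apply/eqP/eqP => [[]|->].
Qed.

Lemma card_covered_slide (I : {set G}) u w : u \in I -> w \notin I ->
  #|covered I :\: covered (I :\ u :|: [set w])| <= (u \in Vset e k) /\
  #|covered (I :\ u :|: [set w]) :\: covered I| <= (w \in Vset e k).
Proof.
move=> uI wI; rewrite -!preimsetD -card_covered1 -card_covered1.
by split; apply/subset_leq_card/preimsetS/subsetP=> x; rewrite !inE;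
  case: (x == u); case: (x == w); case: (x \in I).
Qed.

Definition vacate (E : {set V}) (J : {set G}) := E :|: ~: covered J.

Definition potential (E : {set V}) (I : {set G}) := height I + vacate_cost E (covered I).

Lemma slide_potential (E : {set V}) (I : {set G}) u w :
  u \in I -> w \notin I -> adj u w -> ~: covered I \subset E ->
  potential (vacate E (I :\ u :|: [set w])) (I :\ u :|: [set w]) <= (potential E I).+1.
Proof.
move=> uI wI uw vacE; have [out_u in_w] := card_covered_slide uI wI.
have height_slide : height (I :\ u :|: [set w]) + level u = height I + level w.
  exact: big_slide.
set J := I :\ u :|: [set w] in out_u in_w height_slide *.
have := vacate_cost_update (covered J) vacE.
by move: (adj_level uw); rewrite /potential /vacate; lia.
Qed.

Lemma lab_of_inj t t' (a : edgeT e) : lab_of part t a -> lab_of part t' a -> t = t'.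
Proof. by move=> /eqP lab_t /eqP lab_t'; apply: val_inj; rewrite lab_t lab_t'. Qed.

Definition gadgetX (t : labT k) : {set G} :=
  [set x | match x with
           | GA t' => t' == t
           | GP a | GQ a | GR a => lab_of part t a
           | _ => false
           end].

Lemma gadgetX_exit t u w : u \in gadgetX t -> w \notin gadgetX t -> adj u w ->
  exists2 a : edgeT e, w = GX k a & lab_of part t a.
Proof.
rewrite !inE /gadj; case: u => a; case: w => b //=; rewrite ?orbF ?andbT.
- by move=> /eqP-> /negP.
- by move=> lab_a /eqP + lab_b; rewrite (lab_of_inj lab_b lab_a).
- 1,2,3,5: by move=> lab_a /negP + /eqP ab; subst.
by move=> lab_a _ /eqP ab; subst; exists b.
Qed.

Definition lab_edge_in (t : labT k) (E : {set V}) : bool :=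
  [exists a : edgeT e, lab_of part t a && (val a \subset E)].

Lemma lab_edge_inS t (E E' : {set V}) :
  E \subset E' -> lab_edge_in t E -> lab_edge_in t E'.
Proof.
move=> sEE' /existsP[a /andP[lab_a sub_a]]; apply/existsP; exists a.
by rewrite lab_a (subset_trans sub_a sEE').
Qed.

Lemma slide_gadgetX (I : {set G}) u w t : u \in I -> w \notin I -> adj u w ->
  independent adj (I :\ u :|: [set w]) ->
  lab_edge_in t (~: covered (I :\ u :|: [set w])) ||
  (#|I :&: gadgetX t| <= #|(I :\ u :|: [set w]) :&: gadgetX t|).
Proof.
move=> uI wI uw indJ; have := card_slideI (gadgetX t) uI wI.
case: (boolP (u \in gadgetX t)) => u_in; case: (boolP (w \in gadgetX t)) => w_in;
  try by move=> count; apply/orP; right; lia.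
have [a wa lab_a] := gadgetX_exit u_in w_in uw; move=> _.
apply/orP; left; apply/existsP; exists a; rewrite lab_a /=.
apply/subsetP=> v va; rewrite in_setC; apply: contraTN va.
rewrite mem_covered => vJ.
have wJ : w \in I :\ u :|: [set w] by rewrite !inE eqxx orbT.
move/forallP: indJ => /(_ w) /implyP /(_ wJ).
by move=> /forallP /(_ (GV e k v)) /implyP /(_ vJ); rewrite wa /gadj /= orbF.
Qed.

Definition reconf_inv (E : {set V}) (I : {set G}) : Prop :=
  ~: covered I \subset E /\
  forall t, lab_edge_in t E || (#|Sset e k :&: gadgetX t| <= #|I :&: gadgetX t|).

Lemma ts_step_reconf_inv E (I J : {set G}) :
  ts_step adj I J -> independent adj J -> reconf_inv E I ->
  reconf_inv (vacate E J) J /\ potential (vacate E J) J <= (potential E I).+1.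
Proof.
case/existsP=> u /existsP[w /and4P[uI wI uw /eqP->]] indJ [vacE gadget_inv].
split; last exact: slide_potential.
split=> [|t]; first exact: subsetUr.
have [sub1 sub2] : E \subset vacate E (I :\ u :|: [set w]) /\
    ~: covered (I :\ u :|: [set w]) \subset vacate E (I :\ u :|: [set w]).
  by split; [exact: subsetUl | exact: subsetUr].
case/orP: (gadget_inv t) => [/(lab_edge_inS sub1)->//|count_S].
case/orP: (slide_gadgetX t uI wI uw indJ) => [/(lab_edge_inS sub2)->//|count_I].
by rewrite (leq_trans count_S count_I) orbT.
Qed.

Lemma covered_Sset : covered (Sset e k) = setT.
Proof. by apply/setP=> v; rewrite !inE. Qed.

Lemma covered_Tset : covered (Tset e k) = setT.
Proof. by apply/setP=> v; rewrite !inE. Qed.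

Lemma card_labT : #|{: labT k}| = 'C(k, 2).
Proof.
rewrite card_sig -[in RHS](card_ord k) -card_draws.
by apply: eq_card => P; rewrite !inE.
Qed.

Lemma height_Tset : height (Tset e k) = height (Sset e k) + 8 * 'C(k, 2).
Proof.
have disjVU_XY : [disjoint Vset e k :|: Uset e k & Xset e k :|: Yset e k].
  by apply/pred0P=> x /=; rewrite !inE; case: x.
have heightU (A B : {set G}) : [disjoint A & B] -> height (A :|: B) = height A + height B.
  by move=> disjAB; rewrite /height -bigU //; apply: eq_bigl => x; rewrite !inE.
rewrite /Sset /Tset (setUAC _ (Xset e k)) (setUAC _ (Yset e k)).
rewrite (heightU _ (Xset e k)) ?(heightU _ (Yset e k)) /height;
  try by apply: disjointWr disjVU_XY; rewrite ?subsetUl ?subsetUr.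
have -> : \sum_(x in Xset e k) level x = 0 by apply: big1 => x; rewrite inE; case: x.
have -> : Yset e k = [set GB e t | t : labT k].
  apply/setP=> x; rewrite inE; apply/idP/imsetP => [|[t _ ->] //].
  by case: x => // t _; exists t.
rewrite big_imset /=; last by move=> t t' _ _ [].
by rewrite sum_nat_const card_labT addn0 mulnC.
Qed.

Lemma card_gadgetX_Sset t :
  #|Sset e k :&: gadgetX t| = (#|Tset e k :&: gadgetX t|).+1.
Proof.
have -> : Sset e k :&: gadgetX t = GA e t |: (Tset e k :&: gadgetX t).
  apply/setP=> x; rewrite !inE; case: x => //= t'.
  by rewrite orbF; apply/eqP/eqP => [->|[]].
by rewrite cardsU1 !inE.
Qed.

End Reduction.

Section MulticoloredClique.
Variables (V : finType) (e : rel V) (k : nat) (part : V -> 'I_k).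

Lemma exists_labT_pair (i j : 'I_k) : i != j -> exists t : labT k, val t = [set i; j].
Proof.
move=> ij; have card2 : #|[set i; j]| == 2 by rewrite cards2 ij.
by exists (exist (fun P : {set 'I_k} => #|P| == 2) _ card2).
Qed.

Lemma lab_edge_in_oriented (D : {set V}) t i j : symmetric e ->
  val t = [set i; j] -> lab_edge_in e part t D ->
  exists u v, [/\ u \in D, v \in D, e u v, part u = i & part v = j].
Proof.
move=> e_sym tij /existsP[a /andP[/eqP labA subA]].
case: a labA subA => A isA /= labA /subsetP subD.
case/existsP: isA => u /existsP[v /andP[euv /eqP A_uv]]; subst A.
move: labA; rewrite imsetU1 imset_set1 tij => ij_uv.
have uD : u \in D by apply: subD; rewrite !inE eqxx.
have vD : v \in D by apply: subD; rewrite !inE eqxx orbT.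
have : i != j by have := valP t; rewrite tij cards2; case: (i != j).
have : i \in [set part u; part v] by rewrite -ij_uv !inE eqxx.
have : j \in [set part u; part v] by rewrite -ij_uv !inE eqxx orbT.
rewrite !inE => /orP[]/eqP-> /orP[]/eqP-> //; rewrite ?eqxx // => _.
- by exists v, u; rewrite e_sym.
- by exists u, v.
Qed.

Lemma multicolored_clique (D : {set V}) :
  (forall i, exists v, part v = i) -> #|D| <= k ->
  (forall i j, i != j ->
     exists u v, [/\ u \in D, v \in D, e u v, part u = i & part v = j]) ->
  exists f : 'I_k -> V,
    (forall i, part (f i) = i) /\ (forall i j, i != j -> e (f i) (f j)).
Proof.
move=> part_nonempty cardD edges.
have [k_le1 | k_gt1] := leqP k 1.
  have [f part_f] := fin_all_exists part_nonempty.
  exists f; split=> // i j; have := ltn_ord i; have := ltn_ord j.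
  move=> j_lt i_lt /eqP ij; exfalso; apply: ij; apply: ord_inj; lia.
have hit i : exists2 v, v \in D & part v = i.
  have /card_gt0P[j] : 0 < #|[set~ i]| by rewrite cardsC1 card_ord; lia.
  rewrite !inE => ji; have [u [v [_ vD _ _ <-]]] := edges _ _ ji.
  by exists v.
have injD : {in D &, injective part}.
  apply/imset_injP; rewrite eqn_leq leq_imset_card /=.
  have -> : part @: D = setT.
    by apply/setP=> i; rewrite inE; have [v vD <-] := hit i; apply: imset_f.
  by rewrite cardsT card_ord.
have [f fD part_f] := fin_all_exists2 hit.
exists f; split=> // i j ij.
have [u [v [uD vD euv pu pv]]] := edges _ _ ij.
have -> : f i = u by apply: injD; rewrite ?fD ?part_f.
have -> : f j = v by apply: injD; rewrite ?fD ?part_f.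
exact: euv.
Qed.

End MulticoloredClique.

Theorem lemma5p3 (V : finType) (e : rel V) (k : nat) (part : V -> 'I_k)
  (e_sym : symmetric e) (e_irr : irreflexive e)
  (part_nonempty : forall i : 'I_k, exists v, part v = i)
  (no_inner_edge : forall u v, e u v -> part u != part v)
  (m : nat) (hm : m <= 8 * 'C(k, 2) + 2 * k)
  (hseq : ts_reconf (@gadj V e k part) (@Sset V e k) (@Tset V e k) m) :
  exists f : 'I_k -> V,
    (forall i, part (f i) = i) /\ (forall i j, i != j -> e (f i) (f j)).
Proof.
case: hseq => s [size_s path_s last_s /andP[_ states_ok]].
have indep_s : all (independent (gadj part)) s.
  by apply: sub_all states_ok => I /andP[].
have inv_S : reconf_inv part set0 (Sset e k).
  by split=> [|t]; rewrite ?covered_Sset ?setCT ?sub0set // leqnn orbT.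
have [[_ lab_D] pot_D] :=
  path_potential (@ts_step_reconf_inv V e k part) path_s indep_s inv_S.
rewrite last_s size_s in lab_D pot_D.
set D := foldl _ set0 s in lab_D pot_D.
have card_D : #|D| <= k.
  move: pot_D hm; rewrite /potential covered_Tset covered_Sset height_Tset /vacate_cost.
  rewrite setIT set0I cards0; lia.
apply: multicolored_clique part_nonempty card_D _ => i j ij.
have [t tij] := exists_labT_pair ij.
apply: lab_edge_in_oriented e_sym tij _.
by have := lab_D t; rewrite card_gadgetX_Sset ltnn orbF.
Qed.
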